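(* A sequence of positive integers $(k_n,\ldots,k_1)$ is the restricted sequence of some non-crossing $n$-chord diagram if and only if $k_1=1$ and $k_{i+1}\le k_i+1$ for $1\le i\le n-1$.
   Context: A non-crossing $n$-chord diagram is a non-crossing perfect matching of $\{1,\ldots,2n\}$ (arcs in the upper half-plane with endpoints $1,\ldots,2n$); $D_n$ is the set of these, $D_0=\{\phi\}$. For $1\le k\le 2n+1$, $l_k:D_n\to D_{n+1}$: $l_k(\alpha)$ matches $k$ with $k+1$, and each old point $i$ becomes $i$ if $i<k$ and $i+2$ if $i\ge k$, old pairs kept. For $\alpha\in D_n$ ($n\ge1$) let $k_n$ be the smallest $k$ such that $k$ is matched with $k+1$, and $\alpha'\in D_{n-1}$ be $\alpha$ with that arc removed and points renumbered order-preservingly, so $\alpha=l_{k_n}(\alpha')$. The restricted sequence of $\alpha$ is $(k_n,k_{n-1},\ldots,k_1)$, where $(k_{n-1},\ldots,k_1)$ is the restricted sequence of $\alpha'$ (empty for $\phi$). *)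

From mathcomp Require Import all_boot.
Set Implicit Arguments. Unset Strict Implicit. Unset Printing Implicit Defensive.

(* A chord diagram on the points 1..2n is represented by its partner
   function alpha : nat -> nat (alpha i = the point matched with i).
   Values outside 1..2n are irrelevant. *)

Definition in_pts (n i : nat) : bool := (1 <= i) && (i <= n.*2).

Definition perfect_matching (n : nat) (alpha : nat -> nat) : Prop :=
  forall i, in_pts n i ->
    [/\ in_pts n (alpha i), alpha i != i & alpha (alpha i) = i].

Definition non_crossing (n : nat) (alpha : nat -> nat) : Prop :=
  forall a b, in_pts n a -> in_pts n b ->
    ~ [/\ a < b, b < alpha a & alpha a < alpha b].

Definition D (n : nat) (alpha : nat -> nat) : Prop :=
  perfect_matching n alpha /\ non_crossing n alpha.

Definition lk (k : nat) (alpha : nat -> nat) : nat -> nat :=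
  fun i => if i == k then k.+1 else if i == k.+1 then k
           else let j := if i < k then i else i - 2 in
                let m := alpha j in if m < k then m else m + 2.

Definition kmin (n : nat) (alpha : nat -> nat) : nat :=
  nth 0 (iota 1 (n.*2)) (find (fun k => alpha k == k.+1) (iota 1 (n.*2))).

Definition remove_arc (k : nat) (alpha : nat -> nat) : nat -> nat :=
  fun i => let j := if i < k then i else i + 2 in
           let m := alpha j in if m < k then m else m - 2.

(* restricted sequence (k_n, k_{n-1}, ..., k_1) of alpha in D_n *)
Fixpoint restricted_seq (n : nat) (alpha : nat -> nat) : seq nat :=
  match n with
  | 0 => [::]
  | n'.+1 => let k := kmin n alpha in
             k :: restricted_seq n' (remove_arc k alpha)
  end.

(* A nonempty non-crossing matching has a short arc (i, i+1): the arc starting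
   just inside a longer arc is nested in it, hence shorter.  Let k be the
   leftmost short arc.  Removing it creates no short arc (j, j+1) with j + 1 < k,
   since such an arc would already have been short before, so the next term k'
   satisfies k <= k' + 1; for n = 1 the only short arc is (1, 2), so k_1 = 1.
   Conversely, if k <= k' + 1 where k' is the leftmost short arc of a diagram,
   inserting the arc (k, k+1) by l_k makes it the new leftmost short arc, and
   removing it gives back the diagram; induction on n builds a diagram with any
   prescribed admissible restricted sequence. *)

From mathcomp Require Import all_boot zify.

Set Implicit Arguments.
Unset Strict Implicit.
Unset Printing Implicit Defensive.

Definition bump2 (k i : nat) : nat := if i < k then i else i + 2.
Definition unbump2 (k m : nat) : nat := if m < k then m else m - 2.

(* Case on the innermost conditionals first, so that lia only sees arithmetic. *)
Ltac case_bump2 := rewrite /bump2 /unbump2; repeat match goal with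
  | |- context [if ?b then _ else _] =>
      lazymatch b with context [if _ then _ else _] => fail | _ =>
        case: (boolP b) => ? /= end
  end.

Lemma bump2K k : cancel (bump2 k) (unbump2 k).
Proof. by move=> i; case_bump2; lia. Qed.

Lemma unbump2K k m : m != k -> m != k.+1 -> bump2 k (unbump2 k m) = m.
Proof. by case_bump2; lia. Qed.

Lemma bump2_neq k i : (bump2 k i != k) && (bump2 k i != k.+1).
Proof. by case_bump2; lia. Qed.

Lemma ltn_bump2 k : {mono bump2 k : i j / i < j}.
Proof. by move=> i j; case_bump2; lia. Qed.

Lemma unbump2_mono k m m' : m < m' -> m != k -> m != k.+1 -> m' != k -> m' != k.+1 ->
  unbump2 k m < unbump2 k m'.
Proof. by case_bump2; lia. Qed.

Lemma bump2_in_pts n k i : in_pts n i -> in_pts n.+1 (bump2 k i).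
Proof. by rewrite /in_pts; case_bump2; lia. Qed.

Lemma unbump2_in_pts n k m : 1 <= k <= n.*2.+1 -> in_pts n.+1 m ->
  m != k -> m != k.+1 -> in_pts n (unbump2 k m).
Proof. by rewrite /in_pts; case_bump2; lia. Qed.

Lemma remove_arcE k f i : remove_arc k f i = unbump2 k (f (bump2 k i)).
Proof. by []. Qed.

Lemma lkE k f i : i != k -> i != k.+1 -> lk k f i = bump2 k (f (unbump2 k i)).
Proof. by rewrite /lk => /negbTE-> /negbTE->. Qed.

Lemma lk_arc k f : lk k f k = k.+1 /\ lk k f k.+1 = k.
Proof. by rewrite /lk eqxx ifN_eq ?eqxx //; lia. Qed.

Lemma remove_arc_lk k f : remove_arc k (lk k f) =1 f.
Proof. by move=> i; have /andP[? ?] := bump2_neq k i; rewrite remove_arcE lkE // !bump2K. Qed.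

Section MatchingWithArc.

Variables (n : nat) (f : nat -> nat) (k : nat).
Hypotheses (pm_f : perfect_matching n f) (k_pt : in_pts n k) (fk : f k = k.+1).

Lemma matching_arc_sym : f k.+1 = k.
Proof. by case: (pm_f k_pt); rewrite fk. Qed.

Lemma matching_avoid_arc x : in_pts n x -> x != k -> x != k.+1 ->
  (f x != k) && (f x != k.+1).
Proof.
move=> x_pt xk xk1; case: (pm_f x_pt) => _ _ ffx.
by apply/andP; split; apply/eqP=> fx; move: ffx; rewrite fx ?fk ?matching_arc_sym; lia.
Qed.

End MatchingWithArc.

Section RemoveArc.

Variables (n : nat) (f : nat -> nat) (k : nat).
Hypotheses (pm_f : perfect_matching n.+1 f) (k_pt : in_pts n.+1 k) (fk : f k = k.+1).

Let bump2_avoid i : in_pts n i ->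
  [/\ in_pts n.+1 (bump2 k i), f (bump2 k i) != k & f (bump2 k i) != k.+1].
Proof.
move=> i_pt; have /andP[ik ik1] := bump2_neq k i.
have bi_pt := bump2_in_pts k i_pt.
by have /andP[] := matching_avoid_arc pm_f k_pt fk bi_pt ik ik1.
Qed.

Lemma perfect_matching_remove_arc : perfect_matching n (remove_arc k f).
Proof.
have k_le : 1 <= k <= n.*2.+1.
  by case: (pm_f k_pt); rewrite fk; move: k_pt; rewrite /in_pts; lia.
move=> i i_pt; have [bi_pt fk0 fk1] := bump2_avoid i_pt.
case: (pm_f bi_pt) => fbi_pt fbi ffbi; rewrite !remove_arcE unbump2K // ffbi bump2K.
split=> //; first exact: unbump2_in_pts.
by apply: contraNneq fbi => fi; rewrite -[f _](unbump2K fk0 fk1) fi.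
Qed.

Lemma non_crossing_remove_arc : non_crossing n.+1 f -> non_crossing n (remove_arc k f).
Proof.
move=> nc_f a b a_pt b_pt [ab b_fa fa_fb].
have [ba_pt fa0 fa1] := bump2_avoid a_pt; have [bb_pt fb0 fb1] := bump2_avoid b_pt.
apply: (nc_f _ _ ba_pt bb_pt).
by rewrite -[f (bump2 k a)](unbump2K fa0 fa1) -[f (bump2 k b)](unbump2K fb0 fb1) !ltn_bump2.
Qed.

End RemoveArc.

Lemma D_remove_arc n f k : D n.+1 f -> in_pts n.+1 k -> f k = k.+1 -> D n (remove_arc k f).
Proof.
case=> pm_f nc_f k_pt fk.
by split; [exact: perfect_matching_remove_arc | exact: non_crossing_remove_arc].
Qed.

Section InsertArc.

Variables (n : nat) (f : nat -> nat) (k : nat).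
Hypothesis k_le : 1 <= k <= n.*2.+1.

Lemma perfect_matching_lk : perfect_matching n f -> perfect_matching n.+1 (lk k f).
Proof.
move=> pm_f i i_pt; have [lkk lkk1] := lk_arc k f.
have [-> | ik] := eqVneq i k; first by rewrite lkk lkk1 /in_pts; split; lia.
have [-> | ik1] := eqVneq i k.+1; first by rewrite lkk1 lkk /in_pts; split; lia.
have /andP[? ?] := bump2_neq k (f (unbump2 k i)).
case: (pm_f _ (unbump2_in_pts k_le i_pt ik ik1)) => fi_pt fi ffi.
rewrite !lkE // bump2K ffi unbump2K //; split=> //; first exact: bump2_in_pts.
by apply: contraNneq fi => bfi; rewrite -{2}bfi bump2K.
Qed.

Lemma non_crossing_lk : non_crossing n f -> non_crossing n.+1 (lk k f).
Proof.
move=> nc_f a b a_pt b_pt [ab b_fa fa_fb]; have [lkk lkk1] := lk_arc k f.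
have [ak | ak] := eqVneq a k; first by move: b_fa fa_fb; rewrite ak lkk; lia.
have [ak1 | ak1] := eqVneq a k.+1; first by move: b_fa fa_fb; rewrite ak1 lkk1; lia.
have [bk | bk] := eqVneq b k; first by move: b_fa fa_fb; rewrite bk lkk; lia.
have [bk1 | bk1] := eqVneq b k.+1; first by move: b_fa fa_fb; rewrite bk1 lkk1; lia.
have /andP[? ?] := bump2_neq k (f (unbump2 k a)).
have /andP[? ?] := bump2_neq k (f (unbump2 k b)).
apply: (nc_f _ _ (unbump2_in_pts k_le a_pt ak ak1) (unbump2_in_pts k_le b_pt bk bk1)).
rewrite !lkE // in b_fa fa_fb.
by split; [exact: unbump2_mono | rewrite -(ltn_bump2 k) unbump2K | rewrite -(ltn_bump2 k)].
Qed.

End InsertArc.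

Lemma D_lk n f k : D n f -> 1 <= k <= n.*2.+1 -> D n.+1 (lk k f).
Proof.
by case=> pm_f nc_f k_le; split; [exact: perfect_matching_lk | exact: non_crossing_lk].
Qed.

Lemma kminP n f k : 1 <= k <= n.*2 -> f k = k.+1 ->
  [/\ 1 <= kmin n f <= k, f (kmin n f) = (kmin n f).+1
    & forall j, 1 <= j < kmin n f -> f j != j.+1].
Proof.
move=> k_le fk; set p := fun j => f j == j.+1.
have has_p : has p (iota 1 n.*2) by apply/hasP; exists k; rewrite ?mem_iota /p ?fk //; lia.
have find_lt : find p (iota 1 n.*2) < n.*2 by rewrite -[X in _ < X](size_iota 1) -has_find.
have kmin_def : kmin n f = (find p (iota 1 n.*2)).+1 by rewrite /kmin nth_iota.
have p_before j : 1 <= j < kmin n f -> ~~ p j.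
  move=> j_lt; have -> : j = nth 0 (iota 1 n.*2) j.-1 by rewrite nth_iota; lia.
  by apply/negbT/before_find; lia.
have p_kmin : p (kmin n f) by rewrite /kmin; exact: nth_find.
split=> //; last exact/eqP.
rewrite kmin_def ltn0Sn /= leqNgt; apply/negP => k_lt.
suff : ~~ p k by rewrite /p fk eqxx.
by apply: p_before; rewrite kmin_def; lia.
Qed.

Lemma kmin_eq n f k : 1 <= k <= n.*2 -> f k = k.+1 ->
  (forall j, 1 <= j < k -> f j != j.+1) -> kmin n f = k.
Proof.
move=> k_le fk below_k; have [/andP[kmin_ge kmin_le] f_kmin _] := kminP k_le fk.
apply/eqP; rewrite eqn_leq kmin_le leqNgt; apply/negP => kmin_lt.
by have := below_k (kmin n f); rewrite f_kmin eqxx kmin_ge kmin_lt => /(_ isT).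
Qed.

(* The arc starting at a+1 lies inside the arc (a, f a), so it is strictly shorter. *)
Lemma D_exists_short_arc n f : D n f -> 0 < n -> exists2 k, 1 <= k <= n.*2 & f k = k.+1.
Proof.
move=> [pm_f nc_f] n_gt0.
suff short_inside d a : in_pts n a -> a < f a -> f a - a <= d ->
    exists2 k, 1 <= k <= n.*2 & f k = k.+1.
  have one_pt : in_pts n 1 by rewrite /in_pts; lia.
  case: (pm_f _ one_pt) => f1_pt f1 _.
  by apply: (short_inside (f 1) 1); move: f1_pt f1; rewrite /in_pts; lia.
elim: d a => [|d IH] a a_pt a_lt len_a; first lia.
have [fa | fa] := eqVneq (f a) a.+1; first by exists a; move: a_pt; rewrite /in_pts; lia.
case: (pm_f _ a_pt) => fa_pt _ ffa.
have a1_pt : in_pts n a.+1 by move: a_pt fa_pt; rewrite /in_pts; lia.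
case: (pm_f _ a1_pt) => fa1_pt fa1 ffa1.
have not_before : ~ f a.+1 < a.
  by move=> lt; apply: (nc_f _ _ fa1_pt a_pt); rewrite ffa1; split; lia.
have not_after : ~ f a < f a.+1 by move=> lt; apply: (nc_f _ _ a_pt a1_pt); split; lia.
have fa1_a : f a.+1 != a by apply/eqP => e; move: ffa1; rewrite e; lia.
have fa1_fa : f a.+1 != f a by apply/eqP => e; move: ffa1; rewrite e ffa; lia.
apply: (IH a.+1) => //; lia.
Qed.

Lemma D_kminP n f : D n f -> 0 < n ->
  [/\ 1 <= kmin n f < n.*2, f (kmin n f) = (kmin n f).+1
    & forall j, 1 <= j < kmin n f -> f j != j.+1].
Proof.
move=> hD n_gt0; have [k k_le fk] := D_exists_short_arc hD n_gt0.
have [/andP[kmin_ge kmin_le] f_kmin below] := kminP k_le fk.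
have kmin_pt : in_pts n (kmin n f) by rewrite /in_pts kmin_ge; lia.
case: hD => pm_f _; case: (pm_f _ kmin_pt); rewrite f_kmin /in_pts => kmin1_pt _ _.
by split=> //; lia.
Qed.

Lemma head_restricted_seq_le n f : D n f -> head 0 (restricted_seq n f) <= n.*2.
Proof. by case: n => [|n] hD //; have [/andP[_ /ltnW]] := D_kminP hD isT. Qed.

Lemma head_restricted_seq_min n f : D n f ->
  forall j, 1 <= j < head 0 (restricted_seq n f) -> f j != j.+1.
Proof.
case: n => [|n] hD j /=; first by rewrite ltn0 andbF.
by have [_ _] := D_kminP hD isT; apply.
Qed.

Lemma kmin_le_head n f : D n.+1 f ->
  kmin n.+1 f <= (head 0 (restricted_seq n (remove_arc (kmin n.+1 f) f))).+1.
Proof.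
case: n => [|n] hD; first by have [/andP[_ k_lt] _ _] := D_kminP hD isT.
have [/andP[k_ge k_lt] fk below_k] := D_kminP hD isT.
set k := kmin n.+2 f in k_ge k_lt fk below_k *.
have k_pt : in_pts n.+2 k by rewrite /in_pts k_ge; lia.
have [/andP[l_ge l_lt] gl _] := D_kminP (D_remove_arc hD k_pt fk) isT.
rewrite /=; set l := kmin n.+1 _ in l_ge l_lt gl *.
rewrite leqNgt; apply/negP => l_lt_k.
have l_pt : in_pts n.+2 l by rewrite /in_pts l_ge; lia.
have /andP[fl_k fl_k1] : (f l != k) && (f l != k.+1).
  by apply: (matching_avoid_arc (proj1 hD) k_pt fk l_pt); lia.
have := below_k l; move: gl; rewrite remove_arcE; case_bump2; lia.
Qed.

Lemma kmin_lk n f k : 1 <= k <= n.*2.+1 ->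
  (forall j, 1 <= j -> j.+1 < k -> f j != j.+1) -> kmin n.+1 (lk k f) = k.
Proof.
move=> k_le below_k; apply: kmin_eq => [||j j_lt]; [lia | exact: (lk_arc k f).1 |].
rewrite lkE; [|lia|lia].
have -> : unbump2 k j = j by rewrite /unbump2 ifT //; lia.
have := below_k j; rewrite /bump2; case: (ltnP (f j) k); lia.
Qed.

Lemma eq_restricted_seq n f g : f =1 g -> restricted_seq n f = restricted_seq n g.
Proof.
elim: n f g => [//|n IH] f g fg /=.
have -> : kmin n.+1 f = kmin n.+1 g.
  by rewrite /kmin (eq_find (a2 := fun k => g k == k.+1)) // => j; rewrite fg.
by congr (_ :: _); apply: IH => i; rewrite !remove_arcE fg.
Qed.

(* For s = (k_n, ..., k_1) the relation says k_(i+1) <= k_i + 1, and the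
   appended sentinel 0 encodes k_1 <= 1. *)
Definition admissible (s : seq nat) : bool := sorted (fun a b => a <= b.+1) (rcons s 0).

Lemma admissible_cons k s : admissible (k :: s) = (k <= (head 0 s).+1) && admissible s.
Proof. by case: s. Qed.

Lemma admissibleE s : admissible s = sorted (fun a b => a <= b.+1) s && (last 0 s <= 1).
Proof. by case: s => // x s; rewrite /admissible rcons_cons /= rcons_path. Qed.

Lemma admissible_nthP s : all (fun k => 0 < k) s ->
  admissible s <->
  (0 < size s -> nth 0 s (size s - 1) = 1) /\
  (forall i, 1 <= i <= size s - 1 -> nth 0 s (size s - i.+1) <= (nth 0 s (size s - i)).+1).
Proof.
move=> pos_s; rewrite admissibleE subn1 nth_last.
have last_gt0 : 0 < size s -> 0 < last 0 s.
  by case: s pos_s => // x s /allP pos_s _; apply/pos_s/mem_last.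
split=> [/andP[/(sortedP 0) step last_le] | [last_eq step]].
  split=> [/last_gt0 | i i_range]; first lia.
  have := step (size s - i.+1); have -> : (size s - i.+1).+1 = size s - i by lia.
  by apply; lia.
apply/andP; split.
  apply/(sortedP 0) => i i_lt; have := step (size s - i.+1).
  have -> : size s - (size s - i.+1) = i.+1 by lia.
  have -> : size s - (size s - i.+1).+1 = i by lia.
  by apply; lia.
by case: (posnP (size s)) => [/eqP/nilP -> | /last_eq ->].
Qed.

Lemma admissible_restricted_seq n f : D n f -> admissible (restricted_seq n f).
Proof.
elim: n f => [//|n IH] f hD; rewrite admissible_cons kmin_le_head //.
have [/andP[k_ge k_lt] fk _] := D_kminP hD isT.
by apply/IH/D_remove_arc => //; rewrite /in_pts k_ge; lia.
Qed.

Lemma restricted_seq_lk n f k : 1 <= k <= n.*2.+1 ->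
  (forall j, 1 <= j -> j.+1 < k -> f j != j.+1) ->
  restricted_seq n.+1 (lk k f) = k :: restricted_seq n f.
Proof.
move=> k_le below_k; rewrite /= kmin_lk //.
by rewrite (eq_restricted_seq _ (remove_arc_lk k f)).
Qed.

Lemma restricted_seq_surj s : admissible s -> all (fun k => 0 < k) s ->
  exists2 f, D (size s) f & restricted_seq (size s) f = s.
Proof.
elim: s => [_ _|k s IH]; first by exists id; split=> [[|i]|[|a] b].
rewrite admissible_cons [all _ _]/= => /andP[k_le adm_s] /andP[k_gt0 pos_s].
have [f hD rs_f] := IH adm_s pos_s; have := head_restricted_seq_le hD.
rewrite rs_f => head_le; change (size (k :: s)) with (size s).+1.
have k_range : 1 <= k <= (size s).*2.+1 by lia.
exists (lk k f); first exact: D_lk.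
rewrite restricted_seq_lk ?rs_f // => j j_ge j_lt.
by apply: (head_restricted_seq_min hD); rewrite rs_f; lia.
Qed.

Theorem mainTheorem3 (n : nat) (s : seq nat) :
  size s = n -> all (fun k => 0 < k) s ->
  ((exists alpha : nat -> nat, D n alpha /\ restricted_seq n alpha = s) <->
   ((0 < n -> nth 0 s (n - 1) = 1) /\
    (forall i, 1 <= i <= n - 1 -> nth 0 s (n - i.+1) <= (nth 0 s (n - i)).+1))).
Proof.
move=> <- pos_s; rewrite -admissible_nthP //; split.
  by case=> f [hD <-]; exact: admissible_restricted_seq.
by move=> /restricted_seq_surj /(_ pos_s) [f hD rs_f]; exists f.
Qed.
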